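(* For any $n\geq 2$, the class $\mathcal{PO}_n$ of all finite partial orders of dimension at most $n$ does not satisfy the amalgamation property.
   Context: The dimension of a partial order $(P,<)$ is the minimum number of linear orders on $P$ whose intersection is $<$. Embeddings of partial orders are injective maps $f$ with $a<b\iff f(a)<f(b)$. A class $\mathcal{K}$ satisfies the amalgamation property if for all $\mathbf{A},\mathbf{B},\mathbf{C}\in\mathcal{K}$ and embeddings $e:\mathbf{A}\to\mathbf{B}$, $f:\mathbf{A}\to\mathbf{C}$, there are $\mathbf{D}\in\mathcal{K}$ and embeddings $g:\mathbf{B}\to\mathbf{D}$, $h:\mathbf{C}\to\mathbf{D}$ with $g\circ e=h\circ f$. *)

From mathcomp Require Import all_boot.
Set Implicit Arguments. Unset Strict Implicit. Unset Printing Implicit Defensive.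

Record finPO := FinPO {
  po_carrier :> finType;
  po_lt : rel po_carrier;
  po_irr : irreflexive po_lt;
  po_trans : transitive po_lt
}.

Definition linear_order (T : finType) (l : rel T) : Prop :=
  irreflexive l /\ transitive l /\ (forall x y : T, x != y -> l x y || l y x).

Definition dim_le (P : finPO) (n : nat) : Prop :=
  exists L : 'I_n -> rel P,
    (forall i, linear_order (L i)) /\
    (forall x y : P, po_lt x y = [forall i, L i x y]).

Definition PO_ (n : nat) (P : finPO) : Prop := dim_le P n.

Definition po_embedding (A B : finPO) (f : A -> B) : Prop :=
  injective f /\ (forall a b : A, po_lt a b = po_lt (f a) (f b)).

Definition amalgamation_property (K : finPO -> Prop) : Prop :=
  forall (A B C : finPO) (e : A -> B) (f : A -> C),
    K A -> K B -> K C -> po_embedding e -> po_embedding f ->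
    exists (D : finPO) (g : B -> D) (h : C -> D),
      K D /\ po_embedding g /\ po_embedding h /\
      (forall a : A, g (e a) = h (f a)).

From HB Require Import structures.
From mathcomp Require Import all_boot zify.

(* The counterexample amalgamates [SF n] with itself over its subposet
   [SF_bot n], once along the inclusion and once along the inclusion twisted by
   swapping P and Q. Here [SF n] is the standard example S_n (a_i < b_j iff
   i <> j) together with the fence Q < X > P < Y > R, whose bottoms P, Q, R lie
   below every b_m and whose tops X, Y lie above every a_m with m >= 2; it has
   dimension n, and [SF_bot n] is [SF n] without X and Y.
   In an amalgam with embeddings g and h, the points g P, g Q, g R and h Y, g Y,
   g X form a standard example S_3. In a realizer of the amalgam by n linear
   orders, each order reverses exactly one pair (b_m, a_m) of S_n, and an order
   reversing a pair with m >= 2 cannot put a fence top below a fence bottom.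
   The three pairs of S_3 need three distinct reversing orders, but only the two
   orders reversing (b_0, a_0) and (b_1, a_1) are left. *)

Set Implicit Arguments.
Unset Strict Implicit.
Unset Printing Implicit Defensive.

Definition standard_example (D : finPO) (k : nat) (a b : 'I_k -> D) : Prop :=
  (forall i j, po_lt (a i) (b j) = (i != j)) /\ (forall i, a i != b i).

Section Realizer.

Variables (n : nat) (D : finPO) (L : 'I_n -> rel D).
Hypothesis L_linear : forall k, linear_order (L k).
Hypothesis L_realizer : forall x y : D, po_lt x y = [forall k, L k x y].

Lemma realizer_lt k x y : po_lt x y -> L k x y.
Proof. by rewrite L_realizer => /forallP. Qed.

Lemma realizer_reversed x y : ~~ po_lt x y -> x != y -> exists k, L k y x.
Proof.
rewrite L_realizer negb_forall => /existsP[k not_Lxy] neq_xy; exists k.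
by have [_ [_ /(_ x y neq_xy)]] := L_linear k; rewrite (negbTE not_Lxy).
Qed.

Lemma crossing_reversals k u v u' v' :
  L k u v -> L k u' v' -> po_lt v u' -> po_lt v' u -> False.
Proof.
have [irr [tr _]] := L_linear k.
move=> Luv Lu'v' /(realizer_lt k) Lvu' /(realizer_lt k) Lv'u.
by have := tr _ _ _ (tr _ _ _ (tr _ _ _ Luv Lvu') Lu'v') Lv'u; rewrite irr.
Qed.

Variables a b : 'I_n -> D.
Hypothesis ab_std : standard_example a b.

Lemma pair_reversed m : exists k, L k (b m) (a m).
Proof. by case: ab_std => ab_lt ab_neq; apply: realizer_reversed; rewrite ?ab_lt ?eqxx. Qed.

Lemma reversed_pair_unique k m m' :
  L k (b m) (a m) -> L k (b m') (a m') -> m = m'.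
Proof.
case: ab_std => ab_lt _ Lm Lm'; case: (eqVneq m m') => // neq_mm'.
by case: (crossing_reversals Lm Lm'); rewrite ab_lt // eq_sym.
Qed.

Let reverser m := xchoose (pair_reversed m).

Lemma reverser_onto k : exists m, k = reverser m.
Proof.
have reverser_inj : injective reverser.
  move=> m m' eq_rev; apply: (reversed_pair_unique (xchooseP (pair_reversed m))).
  by rewrite -/(reverser m) eq_rev; exact: (xchooseP (pair_reversed m')).
by have /codomP[m ->] := injF_onto reverser_inj k; exists m.
Qed.

Lemma order_reverses_pair k : exists m, L k (b m) (a m).
Proof. by have [m ->] := reverser_onto k; exists m; exact: (xchooseP (pair_reversed m)). Qed.

Lemma reversing_order_unique k k' m :
  L k (b m) (a m) -> L k' (b m) (a m) -> k = k'.
Proof.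
suff revE l : L l (b m) (a m) -> l = reverser m by move=> /revE -> /revE ->.
have [m' ->] := reverser_onto l => Lm.
by rewrite -(reversed_pair_unique (xchooseP (pair_reversed m')) Lm).
Qed.

Lemma realizer_crossing_le (k j : nat) (c d : 'I_k -> D) :
  standard_example c d ->
  (forall (m : 'I_n) i, j <= m -> po_lt (c i) (b m) /\ po_lt (a m) (d i)) ->
  k <= j.
Proof.
case=> cd_lt cd_neq cross.
have cd_reversed i : exists l, L l (d i) (c i).
  by apply: realizer_reversed; rewrite ?cd_lt ?eqxx.
pose kappa i := xchoose (cd_reversed i).
have kappaP i : L (kappa i) (d i) (c i) := xchooseP (cd_reversed i).
pose mu i := xchoose (order_reverses_pair (kappa i)).
have muP i : L (kappa i) (b (mu i)) (a (mu i)) :=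
  xchooseP (order_reverses_pair (kappa i)).
have mu_lt i : mu i < j.
  rewrite ltnNge; apply/negP => /(cross _ i)[c_lt_b a_lt_d].
  exact: crossing_reversals (kappaP i) (muP i) c_lt_b a_lt_d.
have mu_inj : injective (fun i => Ordinal (mu_lt i)).
  move=> i i' /(congr1 val) /= /val_inj eq_mu.
  have eq_kappa : kappa i = kappa i'.
    by apply: (reversing_order_unique (muP i)); rewrite eq_mu; exact: muP.
  case: (eqVneq i i') => // neq_ii'.
  have := kappaP i'; rewrite -eq_kappa => kappaP'.
  by case: (crossing_reversals (kappaP i) kappaP'); rewrite cd_lt // eq_sym.
by have := leq_card _ mu_inj; rewrite !card_ord.
Qed.

End Realizer.

Lemma standard_examples_crossing_le (n k j : nat) (D : finPO)
    (a b : 'I_n -> D) (c d : 'I_k -> D) :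
  dim_le D n -> standard_example a b -> standard_example c d ->
  (forall (m : 'I_n) i, j <= m -> po_lt (c i) (b m) /\ po_lt (a m) (d i)) ->
  k <= j.
Proof.
case=> L [L_linear L_realizer] ab cd cross.
exact: (realizer_crossing_le L_linear L_realizer ab cd cross).
Qed.

Definition subPO (P : finPO) (S : pred P) : finPO :=
  @FinPO {x : P | S x} (fun u v => po_lt (val u) (val v))
    (fun u => po_irr (val u)) (fun u v w => @po_trans P (val u) (val v) (val w)).

Lemma val_embedding (P : finPO) (S : pred P) : po_embedding (val : subPO S -> P).
Proof. by split=> //; exact: val_inj. Qed.

Lemma dim_le_sub (P : finPO) (S : pred P) n : dim_le P n -> dim_le (subPO S) n.
Proof.
case=> L [L_linear L_realizer].
exists (fun k (u v : subPO S) => L k (val u) (val v)); split=> [k|u v]; last exact: L_realizer.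
have [irr [tr total]] := L_linear k.
split=> [u|]; first exact: irr.
by split=> [u v w|u v neq_uv]; [exact: tr | apply: total; rewrite val_eqE].
Qed.

Lemma dim_le_ranks (P : finPO) n (r : 'I_n -> P -> nat) :
  (forall k, injective (r k)) ->
  (forall x y, po_lt x y = [forall k, r k x < r k y]) -> dim_le P n.
Proof.
move=> r_inj r_realizer; exists (fun k x y => r k x < r k y); split=> // k.
split=> [x|]; first exact: ltnn.
split=> [y x z|x y neq_xy]; first exact: ltn_trans.
by rewrite -neq_ltn (inj_eq (r_inj k)).
Qed.

Inductive fence := P | Q | R | X | Y.

Definition fence_nat (t : fence) : nat :=
  match t with P => 0 | Q => 1 | R => 2 | X => 3 | Y => 4 end.
Definition nat_fence (m : nat) : option fence :=
  nth None [:: Some P; Some Q; Some R; Some X; Some Y] m.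
Lemma fence_natK : pcancel fence_nat nat_fence. Proof. by case. Qed.
HB.instance Definition _ := Countable.copy fence (pcan_type fence_natK).
Lemma fence_enumP : Finite.axiom [:: P; Q; R; X; Y]. Proof. by case. Qed.
HB.instance Definition _ := isFinite.Build fence fence_enumP.

Definition fence_lt (s t : fence) : bool :=
  match s, t with P, X | Q, X | P, Y | R, Y => true | _, _ => false end.

Definition fence_top (t : fence) : bool :=
  match t with X | Y => true | _ => false end.

Definition fence_swap (t : fence) : fence :=
  match t with P => Q | Q => P | _ => t end.

Inductive sf_point (n : nat) := Sa of 'I_n | Sb of 'I_n | Fence of fence.
Arguments Fence {n}.

Definition sf_code n (u : sf_point n) : 'I_n + 'I_n + fence :=
  match u with Sa i => inl (inl i) | Sb j => inl (inr j) | Fence t => inr t end.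
Definition code_sf n (s : 'I_n + 'I_n + fence) : sf_point n :=
  match s with inl (inl i) => Sa i | inl (inr j) => Sb j | inr t => Fence t end.
Lemma sf_codeK n : cancel (@sf_code n) (@code_sf n). Proof. by case. Qed.
HB.instance Definition _ n := Finite.copy (sf_point n) (can_type (@sf_codeK n)).

Lemma sf_eqE n (u v : sf_point n) :
  (u == v) = match u, v with
             | Sa i, Sa j | Sb i, Sb j => i == j
             | Fence s, Fence t => s == t
             | _, _ => false
             end.
Proof. by rewrite -(can_eq (@sf_codeK n)); case: u; case: v. Qed.

Definition sf_lt n (u v : sf_point n) : bool :=
  match u, v with
  | Sa i, Sb j => i != j
  | Fence s, Sb j => ~~ fence_top s && (1 < j)
  | Sa i, Fence t => fence_top t && (1 < i)
  | Fence s, Fence t => fence_lt s t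
  | _, _ => false
  end.

Lemma sf_lt_irr n : irreflexive (@sf_lt n).
Proof. by case=> // [[]]. Qed.

Lemma sf_lt_trans n : transitive (@sf_lt n).
Proof. by case=> [i|i|[]] [j|j|[]] [k|k|[]]. Qed.

Definition SF n : finPO := FinPO (@sf_lt_irr n) (@sf_lt_trans n).

Definition sf_top n (u : sf_point n) : bool := if u is Fence t then fence_top t else false.

Definition SF_bot n : finPO := subPO [pred u : SF n | ~~ sf_top u].

Definition sf_swap n (u : sf_point n) : sf_point n :=
  if u is Fence t then Fence (fence_swap t) else u.

Lemma sf_swapK n : involutive (@sf_swap n).
Proof. by case=> // [[]]. Qed.

Lemma sf_lt_swap n (u v : sf_point n) :
  ~~ sf_top u -> ~~ sf_top v -> sf_lt (sf_swap u) (sf_swap v) = sf_lt u v.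
Proof. by case: u => [i|i|[]] //; case: v => [j|j|[]]. Qed.

Definition swap_bot n (u : SF_bot n) : SF n := sf_swap (val u).

Lemma swap_bot_embedding n : po_embedding (@swap_bot n).
Proof.
split=> [u v|u v]; first by rewrite /swap_bot => /(inv_inj (@sf_swapK n)) /val_inj.
by rewrite /= sf_lt_swap //; [exact: (valP u) | exact: (valP v)].
Qed.

Definition fence_rank0 (t : fence) : nat :=
  match t with Q => 0 | P => 1 | X => 2 | R => 3 | Y => 4 end.
Definition fence_rank1 (t : fence) : nat :=
  match t with R => 0 | P => 1 | Y => 2 | Q => 3 | X => 4 end.

Lemma fence_lt_ranks s t :
  fence_lt s t = (fence_rank0 s < fence_rank0 t) && (fence_rank1 s < fence_rank1 t).
Proof. by case: s; case: t. Qed.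

(* The k-th order of the realizer of [SF n], from bottom to top:
   k = 0:  a_i (i >= 2), the fence by [fence_rank0], a_1, b_0, a_0, b_j (j >= 1);
   k = 1:  a_0, a_i (i >= 2), b_1, a_1, b_0, the fence by [fence_rank1], b_j (j >= 2);
   k >= 2: Q, P, R, a_i (i <> k), b_k, a_k, b_j (j <> k), X, Y. *)
Definition sf_rank n (k : nat) (u : sf_point n) : nat :=
  if k == 0 then
    match u with
    | Sa i => if i == 0 :> nat then n + 7 else if i == 1 :> nat then n + 5 else i
    | Sb j => if j == 0 :> nat then n + 6 else n + 7 + j
    | Fence t => n + fence_rank0 t
    end
  else if k == 1 then
    match u with
    | Sa i => if i == 1 :> nat then n + 1 else i
    | Sb j => if j == 1 :> nat then n else if j == 0 :> nat then n + 2 else n + 8 + j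
    | Fence t => n + 3 + fence_rank1 t
    end
  else
    match u with
    | Sa i => if i == k :> nat then n + 6 else 5 + i
    | Sb j => if j == k :> nat then n + 5 else n + 7 + j
    | Fence t => if fence_top t then 2 * n + 7 + fence_rank0 t else fence_rank0 t
    end.

Ltac sf_rank_arith := rewrite /sf_rank /= -?val_eqE ?eqxx //=; repeat case: ifP => ?; lia.

Section Ranks.

Variable n : nat.
Implicit Types u v : sf_point n.

Lemma sf_rank_inj k : injective (@sf_rank n k).
Proof.
move=> u v eq_rank; apply/eqP; move: eq_rank; rewrite sf_eqE.
by case: u => [[i ?]|[i ?]|[]]; case: v => [[j ?]|[j ?]|[]]; sf_rank_arith.
Qed.

Lemma sf_rank_mono k u v : sf_lt u v -> sf_rank k u < sf_rank k v.
Proof. by case: u => [[i ?]|[i ?]|[]]; case: v => [[j ?]|[j ?]|[]]; sf_rank_arith. Qed.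

Lemma sf_rank_reversal u v :
  1 < n -> ~~ sf_lt u v -> exists2 k, k < n & sf_rank k v <= sf_rank k u.
Proof.
move=> n_gt1; case: u => [[i ?]|[i ?]|s]; case: v => [[j ?]|[j ?]|t] /= not_lt.
- case: (ltnP 1 i) => [i_gt1|i_le1]; first by exists i; sf_rank_arith.
  by case: (ltnP 1 j) => j_gt1; [exists 0 | exists i]; sf_rank_arith.
- by move/negPn/eqP: not_lt => [eq_ij]; exists i; sf_rank_arith.
- by case: (ltnP 1 i) => i_gt1; [exists i | exists 0]; move: not_lt; case: t; sf_rank_arith.
- by case: (posnP j) => j_gt0; [exists 1 | exists 0]; sf_rank_arith.
- case: (ltnP 1 j) => [j_gt1|j_le1]; first by exists j; sf_rank_arith.
  by case: (ltnP 1 i) => i_gt1; [exists 0 | exists j]; sf_rank_arith.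
- by exists 0; case: t; sf_rank_arith.
- by exists 1; case: s; sf_rank_arith.
- by case: (ltnP 1 j) => j_gt1; [exists j | exists 1]; move: not_lt; case: s; sf_rank_arith.
- move: not_lt; rewrite fence_lt_ranks negb_and -!leqNgt => /orP[le0|le1].
    by exists 0 => //; sf_rank_arith.
  by exists 1 => //; sf_rank_arith.
Qed.

Lemma sf_rank_realizer u v :
  1 < n -> sf_lt u v = [forall k : 'I_n, sf_rank k u < sf_rank k v].
Proof.
move=> n_gt1; apply/idP/forallP => [lt_uv k | lt_ranks]; first exact: sf_rank_mono.
apply/negPn/negP => /(sf_rank_reversal n_gt1)[k lt_kn].
by rewrite leqNgt (lt_ranks (Ordinal lt_kn)).
Qed.

End Ranks.

Lemma dim_le_SF n : 1 < n -> dim_le (SF n) n.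
Proof.
move=> n_gt1; apply: (@dim_le_ranks (SF n) n _ (fun k : 'I_n => @sf_rank_inj n k)) => u v.
exact: sf_rank_realizer.
Qed.

Lemma dim_le_SF_bot n : 1 < n -> dim_le (SF_bot n) n.
Proof. by move=> /dim_le_SF; exact: dim_le_sub. Qed.

Section Amalgam.

Variables (n : nat) (D : finPO) (g h : SF n -> D).
Hypotheses (g_emb : po_embedding g) (h_emb : po_embedding h).
Hypothesis gh : forall u : SF_bot n, g (val u) = h (swap_bot u).

Lemma g_lt u v : po_lt (g u) (g v) = sf_lt u v.
Proof. by rewrite -g_emb.2. Qed.

Lemma h_lt u v : po_lt (h u) (h v) = sf_lt u v.
Proof. by rewrite -h_emb.2. Qed.

Lemma g_eq_h_swap u : ~~ sf_top u -> g u = h (sf_swap u).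
Proof. by move=> u_bot; exact: (gh (exist _ u u_bot)). Qed.

Definition crown_min (i : 'I_3) : D := g (Fence (nth P [:: P; Q; R] i)).
(* Since [g (Fence P) = h (Fence Q)], the point [h (Fence Y)] lies above
   [g (Fence Q)] and [g (Fence R)] but not above [g (Fence P)]. *)
Definition crown_max (i : 'I_3) : D :=
  nth (h (Fence Y)) [:: h (Fence Y); g (Fence Y); g (Fence X)] i.

Lemma standard_example_Sn : standard_example (fun i => g (Sa i)) (fun i => g (Sb i)).
Proof. by split=> [i j|i]; rewrite ?g_lt // (inj_eq g_emb.1) sf_eqE. Qed.

Lemma standard_example_crown : standard_example crown_min crown_max.
Proof.
split=> [i j|i]; rewrite /crown_min /crown_max.
  by case: j => [[|[|[|//]]] ?]; case: i => [[|[|[|//]]] ?] /=;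
    rewrite ?g_lt // g_eq_h_swap // h_lt.
case: i => [[|[|[|//]]] ?] /=.
- by rewrite g_eq_h_swap // (inj_eq h_emb.1) sf_eqE.
- by rewrite (inj_eq g_emb.1) sf_eqE.
- by rewrite (inj_eq g_emb.1) sf_eqE.
Qed.

Lemma crown_crossing (m : 'I_n) i :
  2 <= m -> po_lt (crown_min i) (g (Sb m)) /\ po_lt (g (Sa m)) (crown_max i).
Proof.
move=> m_ge2; case: i => [[|[|[|//]]] ?]; rewrite /crown_min /crown_max /= !g_lt //=.
by rewrite g_eq_h_swap // h_lt.
Qed.

End Amalgam.

Theorem proposition2p3 (n : nat) : 2 <= n -> ~ amalgamation_property (PO_ n).
Proof.
move=> n_ge2 AP.
have [D [g [h [dimD [g_emb [h_emb gh]]]]]] :=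
  AP _ _ _ _ _ (dim_le_SF_bot n_ge2) (dim_le_SF n_ge2) (dim_le_SF n_ge2)
    (val_embedding _) (@swap_bot_embedding n).
by have := standard_examples_crossing_le dimD (standard_example_Sn g_emb)
  (standard_example_crown g_emb h_emb gh) (crown_crossing g_emb h_emb gh).
Qed.
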